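(* Let $p>3$ be a prime, $q=p^e$, and let $n\ge 0$ be an even integer. Then: (i) $D_{n,3}(1,x)=\dfrac{1}{2^n}f_n(1-4x)$ for every $x\in\mathbb{F}_q$; (ii) $D_{n,3}(1,x)$ is a permutation polynomial of $\mathbb{F}_q$ if and only if $f_n(x)$ is a permutation polynomial of $\mathbb{F}_q$.
   Context: For $n\ge 1$ and $a\in\mathbb{F}_q$, $D_{n,3}(a,x)=\sum_{i=0}^{\lfloor n/2\rfloor}\frac{n-3i}{n-i}\binom{n-i}{i}(-x)^i a^{n-2i}\in\mathbb{F}_q[x]$, where each coefficient $\frac{n-3i}{n-i}\binom{n-i}{i}$ is an integer read modulo $p$; and $D_{0,3}(a,x)=-1$. For even $n\ge0$, $f_n(x)\in\mathbb{Z}[x]$ (viewed in $\mathbb{F}_q[x]$ by reduction mod $p$) is $$f_n(x)=-x^{n/2}+\sum_{j=0}^{n/2-1}\frac{3n-8j-1}{n+1}\binom{n+1}{2j+1}x^j,$$ where $\frac{3n-8j-1}{n+1}\binom{n+1}{2j+1}=3\binom{n}{2j+1}-\binom{n}{2j}$ is an integer. A polynomial $g\in\mathbb{F}_q[x]$ is a permutation polynomial of $\mathbb{F}_q$ if $c\mapsto g(c)$ is a bijection $\mathbb{F}_q\to\mathbb{F}_q$. *)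

From HB Require Import structures.
From mathcomp Require Import all_boot all_order all_algebra all_field.
Set Implicit Arguments. Unset Strict Implicit. Unset Printing Implicit Defensive.
Import Order.TTheory GRing.Theory Num.Theory.
Local Open Scope ring_scope.

(* Integer coefficient (n-3i)/(n-i) * C(n-i,i) of D_{n,3}; the division is exact. *)
Definition Dcoef (n i : nat) : int :=
  (((n%:Z - (3 * i)%N%:Z) * ('C(n - i, i))%:Z) %/ (n - i)%N%:Z)%Z.

Definition Dpoly (F : ringType) (n : nat) (a : F) : {poly F} :=
  if n is 0 then -1 else
  \sum_(i < n./2.+1) ((Dcoef n i)%:~R * a ^+ (n - 2 * i)) *: (- 'X) ^+ i.

(* Integer coefficient (3n-8j-1)/(n+1) * C(n+1,2j+1) of f_n; the division is exact. *)
Definition fcoef (n j : nat) : int :=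
  ((((3 * n)%N%:Z - (8 * j)%N%:Z - 1) * ('C(n.+1, (2 * j).+1))%:Z) %/ (n.+1)%:Z)%Z.

Definition fpoly (F : ringType) (n : nat) : {poly F} :=
  - 'X^(n./2) + \sum_(j < n./2) (fcoef n j)%:~R *: 'X^j.

Definition is_permpoly (F : finFieldType) (g : {poly F}) : Prop :=
  bijective (fun c : F => g.[c]).

From HB Require Import structures.
From mathcomp Require Import all_boot all_order all_algebra all_field.
From mathcomp Require Import zify ring.
Set Implicit Arguments. Unset Strict Implicit. Unset Printing Implicit Defensive.
Import GRing.Theory.
Local Open Scope ring_scope.

(* Write E_m(x) = sum_i C(m-i,i) (-x)^i and A_m(y) = sum_j C(m+1,2j+1) y^j.  Both
   2^m E_m(x) and A_m(1-4x) satisfy u_(m+2) = 2 u_(m+1) - 4x u_m with u_0 = 1, u_1 = 2,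
   so they coincide.  Rewriting the coefficients of D_{n,3} and f_n binomially gives
   D_{n,3}(1,x) = 2 E_(n-1)(x) - E_n(x) and f_n(y) = 4 A_(n-1)(y) - A_n(y), hence (i).
   When p > 3, x |-> 1 - 4x and scaling by 2^-n are bijections of F_q, hence (ii). *)

Lemma big_ord_trunc (R : nmodType) (G : nat -> R) (K N : nat) :
  (K <= N)%N -> (forall i, (K <= i)%N -> G i = 0) ->
  \sum_(i < N) G i = \sum_(i < K) G i.
Proof.
move=> leKN G0; rewrite -(subnKC leKN); elim: (N - K)%N => [|d IH]; first by rewrite addn0.
by rewrite addnS big_ord_recr /= IH G0 ?addr0 // leq_addr.
Qed.

Lemma bin_subS (m i : nat) : 'C(m.+1 - i, i.+1) = ('C(m - i, i.+1) + 'C(m - i, i))%N.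
Proof.
have [le_im | lt_mi] := leqP i m; first by rewrite subSn // binS.
by rewrite !bin_small //; lia.
Qed.

Lemma bin_diff2 (m j : nat) :
  ('C(m.+3, j.+2) + 'C(m.+1, j.+2) = 2 * 'C(m.+2, j.+2) + 'C(m.+1, j))%N.
Proof. have := binS m.+2 j.+1; have := binS m.+1 j.+1; have := binS m.+1 j; lia. Qed.

Lemma eq_seq2_rec (R : ringType) (a b : R) (u v : nat -> R) :
  u 0%N = v 0%N -> u 1%N = v 1%N ->
  (forall m, u m.+2 = a * u m.+1 + b * u m) ->
  (forall m, v m.+2 = a * v m.+1 + b * v m) ->
  u =1 v.
Proof.
move=> e0 e1 recu recv m.
suff [] : u m = v m /\ u m.+1 = v m.+1 by [].
by elim: m => [|m [IH1 IH2]] //; rewrite recu recv IH1 IH2.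
Qed.

Section BinomialSums.
Variable R : comRingType.

Definition fib_sum (x : R) (m : nat) : R :=
  \sum_(i < m.+1) ('C(m - i, i))%:R * (- x) ^+ i.

Definition odd_binsum (y : R) (m : nat) : R :=
  \sum_(j < m.+1) ('C(m.+1, j.*2.+1))%:R * y ^+ j.

Lemma fib_sum_trunc x m N : (m./2 < N)%N ->
  fib_sum x m = \sum_(i < N) ('C(m - i, i))%:R * (- x) ^+ i.
Proof.
pose G i := ('C(m - i, i))%:R * (- x) ^+ i.
have G0 i : (m./2 < i)%N -> G i = 0 by move=> lti; rewrite /G bin_small ?mul0r //; lia.
move=> ltN; rewrite /fib_sum (big_ord_trunc (G := G) _ G0) ?(big_ord_trunc (G := G) ltN G0) //.
by rewrite ltnS; lia.
Qed.

Lemma odd_binsum_trunc y m N : (m./2 < N)%N ->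
  odd_binsum y m = \sum_(j < N) ('C(m.+1, j.*2.+1))%:R * y ^+ j.
Proof.
pose G j := ('C(m.+1, j.*2.+1))%:R * y ^+ j.
have G0 j : (m./2 < j)%N -> G j = 0 by move=> ltj; rewrite /G bin_small ?mul0r //; lia.
move=> ltN; rewrite /odd_binsum (big_ord_trunc (G := G) _ G0) ?(big_ord_trunc (G := G) ltN G0) //.
by rewrite ltnS; lia.
Qed.

Lemma fib_sumSS x m : fib_sum x m.+2 = fib_sum x m.+1 - x * fib_sum x m.
Proof.
rewrite [fib_sum x m.+2]/fib_sum [fib_sum x m.+1]/fib_sum big_ord_recl [in RHS]big_ord_recl /=.
under eq_bigr => i _ do rewrite /bump /= add1n subSS bin_subS natrD mulrDl.
under [in RHS]eq_bigr => i _ do rewrite /bump /= add1n subSS.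
rewrite big_split /= -addrA (@fib_sum_trunc x m m.+2) ?mulr_sumr; last by lia.
rewrite (big_ord_trunc (leqnSn m.+1) (G := fun i => ('C(m - i, i.+1))%:R * (- x) ^+ i.+1)).
  rewrite !bin0 -sumrN; congr (_ + (_ + _)); apply: eq_bigr => i _; rewrite exprS; ring.
by move=> i lei; rewrite bin_small ?mul0r //; lia.
Qed.

Lemma odd_binsumSS y m :
  odd_binsum y m.+2 = 2 * odd_binsum y m.+1 - (1 - y) * odd_binsum y m.
Proof.
suff : odd_binsum y m.+2 + odd_binsum y m - 2 * odd_binsum y m.+1 = y * odd_binsum y m.
  move=> e; transitivity ((odd_binsum y m.+2 + odd_binsum y m - 2 * odd_binsum y m.+1)
    + 2 * odd_binsum y m.+1 - odd_binsum y m); first by ring.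
  by rewrite e; ring.
rewrite [in RHS](@odd_binsum_trunc y m m.+2); last by lia.
rewrite !(@odd_binsum_trunc y _ m.+3); try by lia.
rewrite !mulr_sumr -big_split -sumrB /=.
rewrite big_ord_recl /= !bin1 [X in X + _](_ : _ = 0) ?add0r; last by ring.
apply: eq_bigr => j _; rewrite /bump /= add1n doubleS.
transitivity (('C(m.+3, j.*2.+3) + 'C(m.+1, j.*2.+3))%:R * y ^+ j.+1
  - (2 * 'C(m.+2, j.*2.+3))%:R * y ^+ j.+1); first by rewrite natrD natrM; ring.
by rewrite bin_diff2 natrD exprS; ring.
Qed.

Lemma exp2_fib_sum x m : 2 ^+ m * fib_sum x m = odd_binsum (1 - 4 * x) m.
Proof.
apply: (@eq_seq2_rec _ 2 (- (4 * x)) (fun m => 2 ^+ m * fib_sum x m)) => {m} [||m|m].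
- by rewrite /fib_sum /odd_binsum !big_ord1 /= expr0 !mul1r.
- rewrite /fib_sum /odd_binsum !big_ord_recr !big_ord0 /=.
  rewrite (_ : 'C(1 - 0, 0) = 1)%N // (_ : 'C(1 - 1, 1) = 0)%N //.
  by rewrite (_ : 'C(2, 1) = 2)%N // (_ : 'C(2, 3) = 0)%N //; ring.
- by rewrite /= fib_sumSS !exprS; ring.
- by rewrite odd_binsumSS; ring.
Qed.
End BinomialSums.

Lemma Dcoef_bin n i : (i.*2 <= n.+1)%N ->
  Dcoef n.+1 i = (2 * 'C(n - i, i))%N%:Z - ('C(n.+1 - i, i))%N%:Z.
Proof.
move=> le2in; rewrite /Dcoef; have := mul_bin_down (n.+1 - i) i.
rewrite (_ : (n.+1 - i).-1 = n - i)%N; last by lia.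
move: ('C(n - i, i)) ('C(n.+1 - i, i)) => c c' e.
have nz : (n.+1 - i)%N%:Z != 0 by apply/eqP; lia.
by rewrite -(mulzK ((2 * c)%N%:Z - c'%:Z) nz); congr (_ %/ _)%Z; rewrite -mul2n in le2in; nia.
Qed.

Lemma fcoef_bin n j : (j.*2 <= n)%N ->
  fcoef n j = (3 * 'C(n, j.*2.+1))%N%:Z - ('C(n, j.*2))%N%:Z.
Proof.
rewrite /fcoef -!mul2n => le2jn.
have := mul_bin_down n.+1 (2 * j).+1; have := mul_bin_diag n.+1 (2 * j) => /=.
move: ('C(n.+1, (2 * j).+1)) ('C(n, (2 * j).+1)) ('C(n, 2 * j)) => c a b e e'.
rewrite -(mulzK ((3 * a)%N%:Z - b%:Z) (_ : n.+1%:Z != 0)) //.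
by congr (_ %/ _)%Z; nia.
Qed.

Lemma horner_Dpoly1 (R : comRingType) (n : nat) (x : R) :
  (Dpoly n.+1 1).[x] = 2 * fib_sum x n - fib_sum x n.+1.
Proof.
rewrite /Dpoly horner_sum (@fib_sum_trunc _ x n n.+1./2.+1) //; last by lia.
rewrite (@fib_sum_trunc _ x n.+1 n.+1./2.+1); last by lia.
rewrite mulr_sumr -sumrB; apply: eq_bigr => i _.
rewrite hornerZ horner_exp hornerN hornerX expr1n mulr1 Dcoef_bin; last by have := ltn_ord i; lia.
by rewrite mulrzBr -!pmulrn natrM; ring.
Qed.

Lemma horner_fpoly (R : comRingType) (n : nat) (y : R) : odd n ->
  (fpoly R n.+1).[y] = 4 * odd_binsum y n - odd_binsum y n.+1.
Proof.
move=> odd_n; have half_n : n.+1./2.*2 = n.+1 by rewrite -[RHS]odd_double_half /= odd_n.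
rewrite /fpoly hornerD hornerN hornerXn horner_sum.
rewrite (@odd_binsum_trunc _ y n n.+1./2.+1) ?(@odd_binsum_trunc _ y n.+1 n.+1./2.+1); try lia.
rewrite mulr_sumr -sumrB big_ord_recr /= addrC half_n binn bin_small //; congr (_ + _).
  by rewrite mul0r mulr0 sub0r mul1r.
apply: eq_bigr => j _; rewrite hornerZ hornerXn fcoef_bin; last by have := ltn_ord j; lia.
by rewrite (binS n.+1) mulrzBr -!pmulrn natrD natrM; ring.
Qed.

Lemma Dpoly1_fpoly (R : comRingType) (n : nat) (x : R) : ~~ odd n ->
  2 ^+ n * (Dpoly n 1).[x] = (fpoly R n).[1 - 4 * x].
Proof.
case: n => [_ | n /negbNE odd_n].
  by rewrite /fpoly /= big_ord0 addr0 !hornerN hornerC hornerXn !expr0 mul1r.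
rewrite horner_Dpoly1 horner_fpoly // -!exp2_fib_sum !exprS; ring.
Qed.

Lemma bij_affine (F : fieldType) (b k : F) : k != 0 -> bijective (fun c => b + k * c).
Proof.
move=> nzk; exists (fun c => k^-1 * (c - b)) => c; first by rewrite addrC addKr mulKf.
by rewrite mulVKf // addrC subrK.
Qed.

Lemma bij_scale_comp_affine (F : fieldType) (f g : F -> F) (a b k : F) :
  a != 0 -> k != 0 -> (forall c, f c = a * g (b + k * c)) -> bijective g -> bijective f.
Proof.
move=> nza nzk fE bij_g.
apply: (eq_bij (bij_comp (bij_comp (bij_affine 0 nza) bij_g) (bij_affine b nzk))) => c /=.
by rewrite fE add0r.
Qed.

Lemma bij_scale_comp_affineE (F : fieldType) (f g : F -> F) (a b k : F) :
  a != 0 -> k != 0 -> (forall c, f c = a * g (b + k * c)) -> bijective f <-> bijective g.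
Proof.
move=> nza nzk fE; split; last exact: bij_scale_comp_affine fE.
apply: (bij_scale_comp_affine (a := a^-1) (b := - (b / k)) (k := k^-1)); rewrite ?invr_eq0 //.
by move=> c; rewrite fE mulKf //; congr g; field.
Qed.

Theorem theorem3p2 (F : finFieldType) (p : nat) (hp : prime p) (hp3 : (3 < p)%N)
  (hchar : p \in [pchar F]) (n : nat) (hn : ~~ odd n) :
  (forall x : F, (Dpoly n 1).[x] = (2 ^+ n)^-1 * (fpoly F n).[1 - 4 * x]) /\
  (is_permpoly (Dpoly n (1 : F)) <-> is_permpoly (fpoly F n)).
Proof.
have nz2 : (2 : F) != 0.
  by apply/negP; rewrite -(dvdn_pcharf hchar) => /dvdn_leq; lia.
have nz4 : (- 4 : F) != 0 by rewrite oppr_eq0 (_ : 4 = 2 * 2) ?mulf_neq0 // -natrM.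
have DE x : (Dpoly n 1).[x] = (2 ^+ n)^-1 * (fpoly F n).[1 - 4 * x].
  by rewrite -Dpoly1_fpoly // mulKf // expf_neq0.
split=> //; apply: (bij_scale_comp_affineE (a := (2 ^+ n)^-1) (b := 1) (k := - 4)) => // [|x].
  by rewrite invr_eq0 expf_neq0.
by rewrite DE mulNr.
Qed.
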